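(* Let $G$ be a finite abelian group with $|G|\ge 3$. Then \[ \mathsf{BO}(|G|-2,G)=\begin{cases}|G|-2, & \text{if } |G| \text{ is odd},\\ |G|+1, & \text{if } \exp(G)=2 \text{ or } |G|=4,\\ |G|-1, & \text{otherwise.}\end{cases} \]
   Context: Groups are written additively. For a positive integer $k$, a set $\{g_1,\dots,g_k\}$ of $k$ distinct elements of a finite abelian group $G$ is called $k$-barycentric if $\sum_{i=1}^k g_i = k\,g_j$ for some $1\le j\le k$. The $k$-th barycentric Olson constant $\mathsf{BO}(k,G)$ is the smallest integer $\ell$ such that every subset $A\subseteq G$ with $|A|\ge \ell$ contains a $k$-barycentric subset (so that always $\mathsf{BO}(k,G)\le |G|+1$). $\exp(G)$ denotes the exponent of $G$. *)

(* Groups written multiplicatively (finGroupType); the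
   abelian hypothesis is [abelian [set: gT]]. *)
From mathcomp Require Import all_boot all_fingroup all_solvable.
Set Implicit Arguments. Unset Strict Implicit. Unset Printing Implicit Defensive.
Local Open Scope group_scope.

Definition barycentric (gT : finGroupType) (k : nat) (S : {set gT}) : bool :=
  (#|S| == k) && [exists j in S, \prod_(g in S) g == j ^+ k].

Definition BO_prop (gT : finGroupType) (k l : nat) : bool :=
  [forall A : {set gT}, (l <= #|A|) ==>
     [exists S : {set gT}, (S \subset A) && barycentric k S]].

Lemma BO_prop_top (gT : finGroupType) (k : nat) : exists l, BO_prop gT k l.
Proof.
exists #|gT|.+1; apply/forallP => A; apply/implyP => H.
by have := max_card A; rewrite leqNgt H.
Qed.

Definition BO (gT : finGroupType) (k : nat) : nat := ex_minn (BO_prop_top gT k).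

(* Write n = |G| and let sigma be the product of all elements of G.  A set S
   of size n - 2 has complement {a, b} with a != b; its product is
   sigma (ab)^-1 and j^(n-2) = (j^2)^-1, so S is (n-2)-barycentric exactly
   when sigma j^2 = ab for some j in S (lemma [barycentric_complP]).  Every
   case of the theorem is then a statement about the equation sigma j^2 = ab:
   - n odd: sigma = 1 and ab has a square root j = (ab)^((n+1)/2), which is
     neither a nor b; hence every (n-2)-set is barycentric and BO = n - 2.
   - n even: squaring is not onto, and a translation argument bounds the set
     of values sigma g^2 by n/2, so some c avoids it and the complement of
     {1, c} is a non-barycentric (n-2)-set: BO >= n - 1.
   - exponent 2: sigma = 1 and j^2 = 1 force ab = 1, i.e. a = b; for n = 4
     no 2-set {a, b} is barycentric at all.  So G itself has no barycentric
     (n-2)-subset and BO = n + 1.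
   - otherwise some z has z^2 != 1; the same counting produces, inside any
     (n-1)-set, a complement {b, c} and a witness g: BO = n - 1.
   The first lemmas characterise BO as the least l with the property. *)
From HB Require Import structures.
From mathcomp Require Import all_boot all_fingroup all_solvable.
From mathcomp Require Import zify.
Set Implicit Arguments. Unset Strict Implicit. Unset Printing Implicit Defensive.
Local Open Scope group_scope.

Lemma BO_prop_mono (gT : finGroupType) k l l' :
  BO_prop gT k l -> (l <= l')%N -> BO_prop gT k l'.
Proof.
move=> /forallP BOl le_ll'; apply/forallP => A; apply/implyP => lA.
by have := BOl A; rewrite (leq_trans le_ll' lA).
Qed.

Lemma BO_eq (gT : finGroupType) k v :
  BO_prop gT k v -> (0 < v)%N -> ~~ BO_prop gT k v.-1 -> BO gT k = v.
Proof.
move=> BOv v_gt0 notBO; rewrite /BO; case: ex_minnP => m BOm minm.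
apply/eqP; rewrite eqn_leq minm //= leqNgt; apply/negP => lt_mv.
by move: notBO; rewrite (BO_prop_mono BOm) // -ltnS prednK.
Qed.

Lemma BO_prop_vacuous (gT : finGroupType) k : BO_prop gT k #|gT|.+1.
Proof. by apply/forallP => A; apply/implyP; rewrite ltnNge max_card. Qed.

Lemma BO_max (gT : finGroupType) k :
  ~~ BO_prop gT k #|gT| -> BO gT k = #|gT|.+1.
Proof. by move=> notBO; apply: BO_eq => //; apply: BO_prop_vacuous. Qed.

Lemma subset_of_card (T : finType) (A : {set T}) k :
  (k <= #|A|)%N -> exists2 S : {set T}, S \subset A & #|S| = k.
Proof.
case/card_geqP => s [uniq_s size_s sA]; exists [set x in s].
  by apply/subsetP => x; rewrite inE => /sA.
by rewrite cardsE (card_uniqP uniq_s).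
Qed.

Lemma BO_prop_pred_fail (gT : finGroupType) k :
  (0 < k)%N -> (k <= #|gT|)%N -> ~~ BO_prop gT k k.-1.
Proof.
move=> k_gt0 le_kn; have : (k.-1 <= #|[set: gT]|)%N.
  by rewrite cardsT (leq_trans (leq_pred k)).
case/subset_of_card => A _ cardA; apply/negP => /forallP /(_ A).
rewrite cardA leqnn /= => /existsP [S /andP [SA /andP [/eqP cardS _]]].
by have := subset_leq_card SA; rewrite cardS cardA leqNgt ltn_predL k_gt0.
Qed.

Lemma expg_card (gT : finGroupType) (x : gT) : x ^+ #|gT| = 1.
Proof. by have := expg_cardG (in_setT x); rewrite cardsT. Qed.

Lemma expg_card_sub2 (gT : finGroupType) (x : gT) :
  (2 <= #|gT|)%N -> x ^+ (#|gT| - 2) = (x ^+ 2)^-1.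
Proof.
by move=> n_ge2; apply: (mulIg (x ^+ 2)); rewrite mulVg -expgD subnK ?expg_card.
Qed.

Lemma card_translate_disjoint (gT : finGroupType) (Q : {set gT}) (y : gT) :
  (forall q, q \in Q -> y * q \notin Q) -> (#|Q| + #|Q| <= #|gT|)%N.
Proof.
move=> yQ_disj; have : [set y * q | q in Q] \subset ~: Q.
  by apply/subsetP => _ /imsetP [q qQ ->]; rewrite in_setC yQ_disj.
move/subset_leq_card; rewrite card_imset; last exact: mulgI.
by rewrite -(leq_add2l #|Q|) cardsC.
Qed.

Lemma sqrt_odd_order (gT : finGroupType) (x : gT) :
  odd #|gT| -> (x ^+ (#|gT|.+1)./2) ^+ 2 = x.
Proof.
by move=> odd_n; rewrite -expgM muln2 halfK /= odd_n subn0 expgS expg_card mulg1.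
Qed.

(* In a group of even order squaring is not onto, as it is not injective:
   z^2 = 1^2 for an element z of order 2 given by Cauchy's theorem. *)
Lemma exists_non_square (gT : finGroupType) :
  ~~ odd #|gT| -> exists y : gT, y \notin [set g ^+ 2 | g in [set: gT]].
Proof.
move=> even_n; have [|z _ ord_z] := @Cauchy _ 2 [set: gT]%G isT.
  by rewrite cardsT dvdn2.
have z_neq1 : z != 1 by rewrite -order_eq1 ord_z.
have sq_not_inj : (#|[set g ^+ 2 | g in [set: gT]]| < #|[set: gT]|)%N.
  rewrite ltn_neqAle leq_imset_card andbT; apply/negP => /imset_injP sq_inj.
  have := sq_inj z 1 (in_setT z) (in_setT 1).
  by rewrite expg1n -ord_z expg_order => /(_ erefl) /eqP; rewrite (negbTE z_neq1).
have not_onto : ~~ ([set: gT] \subset [set g ^+ 2 | g in [set: gT]]).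
  by apply/negP => /subset_leq_card; rewrite leqNgt sq_not_inj.
by case/subsetPn: not_onto => y _ ny; exists y.
Qed.

Lemma exists_square_neq1 (gT : finGroupType) :
  (1 < #|gT|)%N -> exponent [set: gT] != 2 -> exists z : gT, z ^+ 2 != 1.
Proof.
move=> n_gt1 exp_neq2; apply/existsP; rewrite -negb_forall.
apply: contra exp_neq2 => /forallP sq1.
have exp_dvd2 : (exponent [set: gT] %| 2)%N.
  by apply/exponentP => x _; apply/eqP/sq1.
have : ~~ (exponent [set: gT] %| 1)%N.
  rewrite -(trivg_exponent [set: gT]%G); apply: contraL n_gt1 => /eqP /= triv.
  by rewrite -cardsT triv cards1.
by move: exp_dvd2; case: (exponent _) => [|[|[|e]]].
Qed.

Section AbelianGroup.
Variable gT : finGroupType.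
Hypothesis mulC : commutative ( *%g : gT -> gT -> gT).
HB.instance Definition _ := SemiGroup.isCommutativeLaw.Build gT *%g mulC.
Local Notation n := #|gT|.

(* The product of all elements of the group; the instance above lets the
   commutative big-operator lemmas reorder such products. *)
Definition total_prod : gT := \prod_(g : gT) g.

Lemma mulgCA (x y z : gT) : x * (y * z) = y * (x * z).
Proof. by rewrite !mulgA (mulC x y). Qed.

Lemma prod_setC (S : {set gT}) :
  \prod_(g in S) g = total_prod * (\prod_(g in ~: S) g)^-1.
Proof.
rewrite /total_prod [in RHS](bigID (mem S)) /=.
have -> : \prod_(g | g \notin S) g = \prod_(g in ~: S) g.
  by apply: eq_bigl => g; rewrite in_setC.
by rewrite mulgK.
Qed.

Lemma prod_set2 (a b : gT) : a != b -> \prod_(g in [set a; b]) g = a * b.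
Proof.
move=> ab; rewrite (big_setD1 a) ?setU11 //= setU1K ?big_set1 //.
by rewrite in_set1.
Qed.

Lemma card_sub2_compl (S : {set gT}) : #|S| = (n - 2)%N -> (2 <= n)%N ->
  exists a b, a != b /\ S = ~: [set a; b].
Proof.
move=> cardS n_ge2; have /cards2P [a [b [ab eqSC]]] : #|~: S| == 2.
  by rewrite -(eqn_add2l (n - 2)) -{1}cardS cardsC subnK.
by exists a, b; split; rewrite // -eqSC setCK.
Qed.

Lemma card_compl_pair (a b : gT) : a != b -> #|~: [set a; b]| = (n - 2)%N.
Proof. by move=> ab; rewrite cardsCs setCK cards2 ab. Qed.

Lemma barycentric_complP (a b : gT) : a != b ->
  reflect (exists2 j, j \in ~: [set a; b] & total_prod * j ^+ 2 = a * b)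
          (barycentric (n - 2) (~: [set a; b])).
Proof.
move=> ab; have n_ge2 : (2 <= n)%N.
  by have := max_card [set a; b]; rewrite cards2 ab.
rewrite /barycentric card_compl_pair // eqxx /=.
apply: (iffP existsP) => [[j /andP [jS /eqP prodS]] | [j jS eq_ab]]; exists j => //.
  move: prodS; rewrite prod_setC setCK prod_set2 // expg_card_sub2 //.
  by move=> /(canRL (mulgK _)) ->; rewrite invgK -mulgA (mulC (a * b)) mulKg.
rewrite jS prod_setC setCK prod_set2 // expg_card_sub2 // -eq_ab invMg.
by rewrite mulgCA mulgV mulg1 eqxx.
Qed.

(* The total product is an involution: pair each g with g^-1. *)
Lemma total_prod_inv : total_prod^-1 = total_prod.
Proof.
rewrite /total_prod -big_rev -prodgV big_rev (reindex_inj invg_inj) /=.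
by apply: eq_bigr => g _; rewrite invgK.
Qed.

(* In odd order, total_prod is an involution whose order divides n: it is 1. *)
Lemma total_prod_odd : odd n -> total_prod = 1.
Proof.
move=> odd_n; have sq1 : total_prod ^+ 2 = 1.
  by rewrite expgS expg1 -{1}total_prod_inv mulVg.
have := expg_card total_prod.
by rewrite -(odd_double_half n) odd_n -mul2n expgD expgM sq1 expg1n expg1 mulg1.
Qed.

(* If every element squares to 1 and A (of size 2m) is stable under
   translation by x != 1, then A splits into pairs {g, x g} of product x. *)
Lemma prod_translation_stable (x : gT) : x != 1 -> (forall g : gT, g ^+ 2 = 1) ->
  forall m (A : {set gT}), #|A| = m.*2 ->
  (forall g, g \in A -> x * g \in A) -> \prod_(g in A) g = x ^+ m.
Proof.
move=> x_neq1 sq1; elim=> [|m IHm] A cardA xA.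
  by rewrite (cards0_eq cardA) big_set0.
have [g gA] : exists g, g \in A by apply/card_gt0P; rewrite cardA doubleS.
have xgA := xA g gA.
have xg_neq_g : x * g != g by rewrite -{2}[g]mul1g (inj_eq (mulIg g)).
rewrite (big_setD1 g gA) (big_setD1 (x * g)) /=; last by rewrite !inE xg_neq_g.
rewrite IHm.
- by rewrite mulgA mulgCA -expg2 sq1 mulg1 -expgS.
- move: cardA; rewrite (cardsD1 g A) gA (cardsD1 (x * g) (A :\ g)) !inE xg_neq_g xgA.
  by rewrite doubleS !add1n => -[].
move=> h; rewrite !inE => /and3P [h_neq_xg h_neq_g hA].
rewrite xA // andbT; apply/andP; split.
  by apply: contra h_neq_g => /eqP /mulgI ->.
by apply: contra h_neq_xg => /eqP <-; rewrite mulgA -expg2 sq1 mul1g.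
Qed.

(* In an elementary abelian 2-group with at least 3 elements the total
   product is 1: it equals x^(n/2) for every x != 1, and there are two
   distinct such x. *)
Lemma total_prod_exp2 : (2 < n)%N -> (forall g : gT, g ^+ 2 = 1) -> total_prod = 1.
Proof.
move=> n_gt2 sq1; have [odd_n | even_n] := boolP (odd n).
  exact: total_prod_odd.
have /card_gt1P [x [y [x_neq1 y_neq1 x_neq_y]]] : (1 < #|[set~ (1%g : gT)]|)%N.
  by rewrite cardsC1 -(subnKC n_gt2).
rewrite !inE in x_neq1 y_neq1.
have stable (z g : gT) : g \in [set: gT] -> z * g \in [set: gT] by rewrite !inE.
have cardT : #|[set: gT]| = (n./2).*2 by rewrite cardsT halfK (negbTE even_n) subn0.
have -> : total_prod = \prod_(g in [set: gT]) g by apply: eq_bigl => g; rewrite inE.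
have parity (z : gT) m : z ^+ m = z ^+ odd m.
  by rewrite -{1}(odd_double_half m) -mul2n expgD expgM sq1 expg1n mulg1.
rewrite (prod_translation_stable x_neq1 sq1 cardT (stable x)) parity.
have := prod_translation_stable y_neq1 sq1 cardT (stable y).
rewrite (prod_translation_stable x_neq1 sq1 cardT (stable x)) !(parity _ (n./2)).
by case: (odd _) => //; rewrite !expg1 => eq_xy; rewrite eq_xy eqxx in x_neq_y.
Qed.

(* Odd order: every (n-2)-set S = ~: {a, b} is barycentric, with j the
   square root of a * b; j lies in S since j^2 = ab with a != b. *)
Lemma BO_prop_odd : (2 < n)%N -> odd n -> BO_prop gT (n - 2) (n - 2).
Proof.
move=> n_gt2 odd_n; apply/forallP => A; apply/implyP => cardA.
have [S SA cardS] := subset_of_card cardA.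
have [a [b [ab eqS]]] := card_sub2_compl cardS (ltnW n_gt2).
apply/existsP; exists S; rewrite SA eqS /=.
pose j := (a * b) ^+ (n.+1)./2; have j2 : j ^+ 2 = a * b by apply: sqrt_odd_order.
apply/barycentric_complP => //; exists j; last by rewrite total_prod_odd // mul1g.
rewrite !inE negb_or; apply/andP; split; apply/eqP => eq_j.
  by move: j2; rewrite eq_j expg2 => /mulgI /eqP; rewrite (negbTE ab).
by move: j2; rewrite eq_j expg2 => /mulIg /eqP; rewrite eq_sym (negbTE ab).
Qed.

Lemma BO_odd : (2 < n)%N -> odd n -> BO gT (n - 2) = (n - 2)%N.
Proof.
move=> n_gt2 odd_n; apply: BO_eq; first exact: BO_prop_odd.
  by rewrite subn_gt0.
by apply: BO_prop_pred_fail; rewrite ?subn_gt0 ?leq_subr.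
Qed.

(* Even order: the values total_prod * g^2 are disjoint from their translate
   by a non-square y, so they miss some c != 1, and then ~: {1, c} is an
   (n-2)-set that is not barycentric. *)
Lemma not_BO_prop_even : (2 < n)%N -> ~~ odd n -> ~~ BO_prop gT (n - 2) (n - 2).
Proof.
move=> n_gt2 even_n; have [y y_nonsq] := exists_non_square even_n.
pose V := [set total_prod * g ^+ 2 | g in [set: gT]].
have cardV : (#|V| + #|V| <= n)%N.
  apply: (card_translate_disjoint (y := y)) => _ /imsetP [g _ ->].
  apply/negP => /imsetP [h _ eq_h]; move/negP: y_nonsq; apply.
  apply/imsetP; exists (h * g^-1); first exact: in_setT.
  rewrite expgMn; last exact: mulC.
  by rewrite expgVn -(mulKg total_prod (h ^+ 2)) -eq_h mulgCA mulKg mulgK.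
have : ~~ ([set: gT] \subset 1 |: V).
  apply/negP => /subset_leq_card; rewrite cardsT cardsU1 leqNgt.
  apply/negP; apply/negPn; apply: (leq_ltn_trans (leq_add (leq_b1 _) (leqnn _))).
  by move: #|V| n cardV n_gt2 => v m; lia.
case/subsetPn => c _; rewrite !inE negb_or => /andP [c_neq1 cV].
have one_neq_c : (1 : gT) != c by rewrite eq_sym.
apply/negP => /forallP /(_ (~: [set 1; c])); rewrite card_compl_pair // leqnn /=.
case/existsP => S /andP [SA baryS].
have eqS : S = ~: [set 1; c].
  apply/eqP; rewrite eqEcard SA card_compl_pair //.
  by case/andP: baryS => /eqP ->; rewrite leqnn.
move: baryS; rewrite eqS => /(barycentric_complP one_neq_c) [j _].
rewrite mul1g => eq_c; move/negP: cV; apply.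
by apply/imsetP; exists j; rewrite ?in_setT.
Qed.

(* Exponent 2: with total_prod = 1 and j^2 = 1 the condition reads a * b = 1,
   i.e. a = b; so G contains no barycentric (n-2)-subset. *)
Lemma not_BO_prop_exp2 : (2 < n)%N -> (forall g : gT, g ^+ 2 = 1) ->
  ~~ BO_prop gT (n - 2) n.
Proof.
move=> n_gt2 sq1; apply/negP => /forallP /(_ [set: gT]); rewrite cardsT leqnn /=.
case/existsP => S /andP [_ baryS].
have [a [b [ab eqS]]] := card_sub2_compl (eqP (proj1 (andP baryS))) (ltnW n_gt2).
move: baryS; rewrite eqS => /(barycentric_complP ab) [j _].
rewrite total_prod_exp2 // sq1 mul1g => /esym/eqP; rewrite -eq_invg_mul.
have -> : a^-1 = a by rewrite -[a^-1]mul1g -(sq1 a) expg2 mulgK.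
by rewrite (negbTE ab).
Qed.

(* Two distinct elements a, b never form a 2-barycentric set: ab = a^2 or
   ab = b^2 would force a = b. *)
Lemma pair_not_barycentric (a b : gT) : a != b -> ~~ barycentric 2 [set a; b].
Proof.
move=> ab; rewrite /barycentric; apply/negP => /andP [_ /existsP [j]].
rewrite prod_set2 // !inE expg2 => /andP [/orP [] /eqP -> /eqP].
  by move/mulgI => eq_ba; rewrite eq_ba eqxx in ab.
by move/mulIg => eq_ab; rewrite eq_ab eqxx in ab.
Qed.

(* Order 4: the (n-2)-subsets are pairs, none of which is barycentric. *)
Lemma not_BO_prop_four : n = 4 -> ~~ BO_prop gT (n - 2) n.
Proof.
move=> n4; apply/negP => /forallP /(_ [set: gT]); rewrite cardsT leqnn /=.
case/existsP => S /andP [_ baryS]; move: (baryS); rewrite n4 /=.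
case/andP => /cards2P [a [b [ab eqS]]] _.
by move: baryS; rewrite eqS n4; apply/negP; apply: pair_not_barycentric.
Qed.

(* Exponent > 2 and n > 4: any (n-1)-set misses at most one element c.  The
   g with total_prod * g^2 = c^2 are disjoint from their translate by z (as
   z^2 != 1), so some g avoids them and c, c * total_prod^-1; then
   b := total_prod * g^2 * c^-1 gives a barycentric ~: {b, c} with witness g. *)
Lemma BO_prop_non_exp2 (z : gT) : (4 < n)%N -> z ^+ 2 != 1 ->
  BO_prop gT (n - 2) (n - 1).
Proof.
move=> n_gt4 z2_neq1; apply/forallP => A; apply/implyP => cardA.
have [S0 S0A cardS0] := subset_of_card cardA.
have /cards1P [c eqS0C] : #|~: S0| == 1%N.
  by rewrite cardsCs setCK cardS0 subKn // ltnW // (ltn_trans _ n_gt4).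
pose T := [set g | total_prod * g ^+ 2 == c ^+ 2].
have cardT : (#|T| + #|T| <= n)%N.
  apply: (card_translate_disjoint (y := z)) => g; rewrite !inE => /eqP eq_g.
  rewrite expgMn; last exact: mulC.
  rewrite mulgCA -eq_g -{2}[total_prod * g ^+ 2]mul1g (inj_eq (mulIg _)).
  exact: z2_neq1.
have : ~~ ([set: gT] \subset T :|: [set c; c * total_prod^-1]).
  apply/negP => /subset_leq_card; rewrite cardsT leqNgt; apply/negP/negPn.
  apply: (leq_ltn_trans (leq_card_setU _ _)).
  have le_pair : (#|[set c; (c * total_prod^-1)%g]| <= 2)%N.
    by rewrite cards2; case: (_ != _).
  apply: (leq_ltn_trans (leq_add (leqnn _) le_pair)).
  by move: #|T| n cardT n_gt4 => t m; lia.
case/subsetPn => g _; rewrite !inE !negb_or => /and3P [g_notin_T g_neq_c g_neq_cs].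
pose b := total_prod * g ^+ 2 * c^-1.
have b_neq_c : b != c.
  by rewrite /b -(inj_eq (mulIg c)) mulgVK expg2.
have g_neq_b : g != b.
  apply: contra g_neq_cs => /eqP eq_g.
  have /mulgI -> : g * c = g * (total_prod * g).
    by rewrite {1}eq_g /b mulgVK expg2 !mulgA (mulC g total_prod).
  by rewrite (mulC total_prod g) mulgK.
apply/existsP; exists (~: [set b; c]); apply/andP; split.
  by apply: subset_trans S0A; rewrite -[S0]setCK eqS0C setCS sub1set !inE eqxx orbT.
apply/barycentric_complP => //; exists g; last by rewrite /b mulgVK.
by rewrite !inE negb_or g_neq_b.
Qed.

End AbelianGroup.

Local Close Scope group_scope.

Theorem mainTheorem2 (gT : finGroupType) (Hab : abelian [set: gT])
    (Hcard : 3 <= #|gT|) :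
  BO gT (#|gT| - 2) =
    (if odd #|gT| then #|gT| - 2
     else if (exponent [set: gT] == 2) || (#|gT| == 4) then #|gT| + 1
     else #|gT| - 1).
Proof.
have mulC : commutative ( *%g : gT -> gT -> gT).
  by move=> x y; apply: (centsP Hab); rewrite inE.
case: ifP => [odd_n | /negbT even_n]; first exact: BO_odd.
rewrite addn1; case: ifP => [/orP [/eqP exp2 | /eqP n4] | /norP [exp_neq2 n_neq4]].
- apply/BO_max/not_BO_prop_exp2 => // g.
  by rewrite -exp2 expg_exponent ?inE.
- exact/BO_max/not_BO_prop_four.
have [z z2_neq1] := exists_square_neq1 (ltnW Hcard) exp_neq2.
have n_gt4 : 4 < #|gT| by move: Hcard even_n n_neq4; case: #|gT| => [|[|[|[|[|m]]]]].
apply: BO_eq; first exact: BO_prop_non_exp2 z2_neq1.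
  by rewrite subn_gt0 (ltn_trans _ n_gt4).
by rewrite -subn1 -subnDA; apply: not_BO_prop_even.
Qed.
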